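(* Let $X=[X_1|X_2]$ be a real $n\times p$ matrix with $X_1$ of size $n\times p_1$ and $X_2$ of size $n\times p_2$, where $X_1$ has linearly independent columns ($\mathrm{rank}(X_1)=p_1\le n$). Let $X_2=[X_{2,1}|\cdots|X_{2,B}]$ be split into blocks, let $\lambda_1,\dots,\lambda_B>0$ and let $\Lambda$ be the $p_2\times p_2$ diagonal matrix whose diagonal entries corresponding to the columns of $X_{2,b}$ equal $\lambda_b$. Let $\Lambda'=\begin{pmatrix}\mathbf{0}_{p_1\times p_1}&\mathbf{0}_{p_1\times p_2}\\ \mathbf{0}_{p_2\times p_1}&\Lambda\end{pmatrix}$. Let $W$ be an $n\times n$ diagonal matrix with strictly positive diagonal entries, set $X_{k,W}=W^{1/2}X_k$ for $k=1,2$, $P_{1,W}=I_{n\times n}-X_{1,W}(X_{1,W}^TX_{1,W})^{-1}X_{1,W}^T$, $\Sigma_{2,b}=X_{2,b}X_{2,b}^T$, and $$\Gamma_{W,\Lambda}=W^{1/2}\Bigl(\sum_{b=1}^B\lambda_b^{-1}\Sigma_{2,b}\Bigr)W^{1/2}.$$ Let $H_{W,\Lambda}=X(X^TWX+\Lambda')^{-1}X^T$. Then $$H_{W,\Lambda}=W^{-1/2}X_{1,W}(X_{1,W}^TX_{1,W})^{-1}X_{1,W}^T\bigl(I_{n\times n}-W^{1/2}H_{2,W,\Lambda}W^{1/2}\bigr)W^{-1/2}+H_{2,W,\Lambda},$$ where $$H_{2,W,\Lambda}=W^{-1/2}\,\Gamma_{W,\Lambda}\Bigl(I_{n\times n}-(I_{n\times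 n}+P_{1,W}\Gamma_{W,\Lambda})^{-1}P_{1,W}\Gamma_{W,\Lambda}\Bigr)P_{1,W}\,W^{-1/2}.$$
   Context: $X_1$ contains unpenalized covariates and $X_2$ contains penalized covariates in multi-penalty ridge regression; $H_{W,\Lambda}$ is the sample-weighted hat matrix used in iterative weighted least squares. *)

From HB Require Import structures.
From mathcomp Require Import all_boot all_order all_algebra.
From mathcomp Require Import reals.
Set Implicit Arguments. Unset Strict Implicit. Unset Printing Implicit Defensive.
Import Order.TTheory GRing.Theory Num.Theory.
Local Open Scope ring_scope.

Definition sqrt_diag (R : realType) (n : nat) (w : 'I_n -> R) : 'M[R]_n :=
  diag_mx (\row_i Num.sqrt (w i)).
Definition invsqrt_diag (R : realType) (n : nat) (w : 'I_n -> R) : 'M[R]_n :=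
  diag_mx (\row_i (Num.sqrt (w i))^-1).

From HB Require Import structures.
From mathcomp Require Import all_boot all_order all_algebra.
From mathcomp Require Import reals.
Import Order.TTheory GRing.Theory Num.Theory.
Local Open Scope ring_scope.

(* Rescaling by W^{1/2} turns H_{W,Lambda} into W^{-1/2} H W^{-1/2}, where H is the
   unweighted ridge hat matrix of [X1W | C], C = W^{1/2} X2, penalised by
   diag(0, Lambda).  Eliminating the unpenalised block through the Schur
   complement S = C^T P C + Lambda (P = P_{1,W}, Q = I - P) gives
   H = Q + P C S^-1 C^T P.  With Gamma = C Lambda^-1 C^T, the push-through
   identity C S^-1 C^T (I + P Gamma) = Gamma and the equality
   I - (I + P Gamma)^-1 P Gamma = (I + P Gamma)^-1 rewrite C S^-1 C^T P as
   K = Gamma (I - (I + P Gamma)^-1 P Gamma) P = W^{1/2} H_2 W^{1/2}, so that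
   H = Q (I - K) + K.  The inverses exist because X1 has full column rank and
   Lambda is positive definite. *)

Section PositiveDefinite.
Context {R : realFieldType}.

Definition posdefmx {m} (L : 'M[R]_m) :=
  forall v : 'rV_m, v != 0 -> 0 < (v *m L *m v^T) 0 0.

Lemma dotmx_self_ge0 {k} (u : 'rV[R]_k) : 0 <= (u *m u^T) 0 0.
Proof. by rewrite mxE; apply: sumr_ge0 => j _; rewrite mxE -expr2 sqr_ge0. Qed.

Lemma dotmx_self_eq0 {k} (u : 'rV[R]_k) : ((u *m u^T) 0 0 == 0) = (u == 0).
Proof.
apply/idP/eqP => [|->]; last by rewrite mul0mx mxE.
rewrite mxE psumr_eq0 => [/allP u0|j _]; last by rewrite mxE -expr2 sqr_ge0.
apply/matrixP => i j; rewrite (ord1 i) mxE.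
by have /implyP/(_ isT) := u0 j (mem_index_enum j); rewrite mxE mulf_eq0 orbb => /eqP.
Qed.

Lemma gram_quad {n m} (K : 'M[R]_(n, m)) (L : 'M[R]_m) (v : 'rV_m) :
  (v *m (K^T *m K + L) *m v^T) 0 0 =
  (v *m K^T *m (v *m K^T)^T) 0 0 + (v *m L *m v^T) 0 0.
Proof. by rewrite trmx_mul trmxK mulmxDr mulmxDl !mulmxA mxE. Qed.

Lemma unitmx_gram {n m} (K : 'M[R]_(n, m)) : \rank K = m -> K^T *m K \in unitmx.
Proof.
move=> rkK; rewrite -row_free_unit; apply: inj_row_free => v vKK0.
have := gram_quad K 0 v; rewrite addr0 vKK0 !mulmx0 mul0mx mxE addr0.
move/esym/eqP; rewrite dotmx_self_eq0 mulmx_free_eq0 => [/eqP //|].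
by rewrite /row_free mxrank_tr rkK.
Qed.

Lemma unitmx_gram_add_posdef {n m} (K : 'M[R]_(n, m)) (L : 'M[R]_m) :
  posdefmx L -> K^T *m K + L \in unitmx.
Proof.
move=> posL; rewrite -row_free_unit; apply: inj_row_free => v vM0.
apply/eqP; apply: contraT => v_neq0.
have := gram_quad K L v; rewrite vM0 mul0mx mxE => /esym/eqP.
by rewrite gt_eqF // ltr_wpDl ?dotmx_self_ge0 ?posL.
Qed.

End PositiveDefinite.

Lemma mul_mxrow_mxdiag_tr_mxrow {R : pzSemiRingType} {B : nat} {p_ : 'I_B -> nat}
    {m n}
    (Y_ : forall i, 'M[R]_(m, p_ i)) (D_ : forall i, 'M[R]_(p_ i))
    (Z_ : forall i, 'M[R]_(n, p_ i)) :
  \mxrow_i Y_ i *m \mxdiag_i D_ i *m (\mxrow_i Z_ i)^T =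
  \sum_i Y_ i *m D_ i *m (Z_ i)^T.
Proof. by rewrite mul_mxrow_mxdiag tr_mxrow mul_mxrow_mxcol. Qed.

Section ScalarBlockDiagonal.
Context {R : comUnitRingType} {B : nat} {p_ : 'I_B -> nat}.
Local Notation sp := (\sum_(i < B) p_ i)%N.
Local Notation sdiag a := (\mxdiag_i ((a i)%:M : 'M[R]_(p_ i))).

Lemma mulmx_mxdiag_scalar {k} (Y : 'M[R]_(k, sp)) (a : 'I_B -> R) :
  Y *m sdiag a = \mxrow_i (a i *: submxrow Y i).
Proof.
rewrite -[in LHS](submxrowK Y) mul_mxrow_mxdiag.
by apply: eq_mxrow => i; rewrite mul_mx_scalar.
Qed.

Lemma mxdiag_scalarM (a b : 'I_B -> R) :
  sdiag a *m sdiag b = \mxdiag_i ((a i * b i)%:M : 'M[R]_(p_ i)).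
Proof.
rewrite -[sdiag a]mul1mx -[RHS]mul1mx !mulmx_mxdiag_scalar.
by apply: eq_mxrow => i; rewrite mxrowK scalerA mulrC.
Qed.

Lemma invmx_mxdiag_scalar (a : 'I_B -> R) : (forall i, a i \is a GRing.unit) ->
  sdiag a \in unitmx /\ invmx (sdiag a) = \mxdiag_i (((a i)^-1)%:M : 'M[R]_(p_ i)).
Proof.
move=> a_unit.
have VD : \mxdiag_i (((a i)^-1)%:M : 'M[R]_(p_ i)) *m sdiag a = 1%:M.
  by rewrite mxdiag_scalarM (eq_mxdiag (fun i => congr1 _ (mulVr (a_unit i)))) mxdiagZ.
have [_ Du] := mulmx1_unit VD.
by split=> //; rewrite -[RHS](mulmxK Du) VD mul1mx.
Qed.

Lemma mxdiag_scalar_quad (a : 'I_B -> R) (v : 'rV[R]_sp) :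
  (v *m sdiag a *m v^T) 0 0 = \sum_i a i * (submxrow v i *m (submxrow v i)^T) 0 0.
Proof.
rewrite mulmx_mxdiag_scalar -[in v^T](submxrowK v) tr_mxrow mul_mxrow_mxcol summxE.
by apply: eq_bigr => i _; rewrite -scalemxAl mxE.
Qed.

End ScalarBlockDiagonal.

Lemma posdefmx_mxdiag_scalar {R : realFieldType} {B : nat} {p_ : 'I_B -> nat}
    (a : 'I_B -> R) :
  (forall i, 0 < a i) -> posdefmx (\mxdiag_i ((a i)%:M : 'M[R]_(p_ i))).
Proof.
move=> a_gt0 v v_neq0; rewrite mxdiag_scalar_quad lt_def.
have terms_ge0 i : 0 <= a i * (submxrow v i *m (submxrow v i)^T) 0 0.
  exact: mulr_ge0 (ltW (a_gt0 i)) (dotmx_self_ge0 _).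
rewrite sumr_ge0 // andbT; apply: contra v_neq0.
rewrite psumr_eq0 // => /allP blocks0; rewrite -(submxrowK v) -mxrow0.
apply/eqP/eq_mxrow => i; apply/eqP.
have /implyP/(_ isT) := blocks0 i (mem_index_enum i).
by rewrite mulf_eq0 gt_eqF //= dotmx_self_eq0.
Qed.

Section PushThrough.
Context {R : comUnitRingType} {n q : nat}.
Context {P : 'M[R]_n} {C : 'M[R]_(n, q)} {L : 'M[R]_q}.
Hypotheses (L_unit : L \in unitmx) (S_unit : C^T *m P *m C + L \in unitmx).
Local Notation S := (C^T *m P *m C + L).
Local Notation G := (C *m invmx L *m C^T).
Local Notation V := (C *m invmx S *m C^T).

Lemma push_through_r : V *m (1%:M + P *m G) = G.
Proof.
have {2}-> : G = C *m invmx S *m S *m invmx L *m C^T by rewrite mulmxKV.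
by rewrite mulmxDr mulmx1 mulmxDr !mulmxDl !mulmxA mulmxK // addrC.
Qed.

Lemma push_through_l : (1%:M + G *m P) *m V = G.
Proof.
have {2}-> : G = C *m invmx L *m (S *m invmx S) *m C^T by rewrite mulmxV ?mulmx1.
by rewrite mulmxDl mul1mx !(mulmxDl, mulmxDr) !mulmxA mulmxKV // addrC.
Qed.

Lemma unitmx_1DPG : 1%:M + P *m G \in unitmx.
Proof.
suff /mulmx1_unit[] : (1%:M + P *m G) *m (1%:M - P *m V) = 1%:M by [].
have commP : (1%:M + P *m G) *m (P *m V) = P *m ((1%:M + G *m P) *m V).
  by rewrite !(mulmxDl, mulmxDr) !mul1mx !mulmxA.
by rewrite mulmxBr mulmx1 commP push_through_l addrK.
Qed.

Lemma push_through_invmx : G *m invmx (1%:M + P *m G) = V.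
Proof. by apply: (canLR (mulmxK unitmx_1DPG)); rewrite push_through_r. Qed.

End PushThrough.

Lemma subr_invmx_1D {R : comUnitRingType} {n} {X : 'M[R]_n} :
  1%:M + X \in unitmx -> 1%:M - invmx (1%:M + X) *m X = invmx (1%:M + X).
Proof.
move=> U; have E := mulVmx U; rewrite mulmxDr mulmx1 in E.
by rewrite -[X in X - _]E addrK.
Qed.

Section RidgeHat.
Context {R : comUnitRingType}.

Definition hatmx {n p} (A : 'M[R]_(n, p)) : 'M[R]_n :=
  A *m invmx (A^T *m A) *m A^T.

Definition ridge_hatmx {n m} (X : 'M[R]_(n, m)) (L : 'M[R]_m) : 'M[R]_n :=
  X *m invmx (X^T *m X + L) *m X^T.

Lemma trmx_hatmx {n p} (A : 'M[R]_(n, p)) : (hatmx A)^T = hatmx A.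
Proof. by rewrite /hatmx !trmx_mul trmxK trmx_inv trmx_mul trmxK mulmxA. Qed.

Context {n p q : nat} (A : 'M[R]_(n, p)) (C : 'M[R]_(n, q)) (L : 'M[R]_q).
Hypothesis AtA_unit : A^T *m A \in unitmx.
Local Notation Q := (hatmx A).
Local Notation P := (1%:M - hatmx A).
Local Notation S := (C^T *m P *m C + L).
Local Notation G := (C *m invmx L *m C^T).
Local Notation K := (G *m (1%:M - invmx (1%:M + P *m G) *m P *m G) *m P).

Lemma hatmx_mulmx : Q *m A = A.
Proof. by rewrite /hatmx -!mulmxA mulVmx // mulmx1. Qed.

Lemma hatmx_idem : Q *m Q = Q.
Proof. by rewrite {2}/hatmx !mulmxA hatmx_mulmx. Qed.

Lemma residual_gram : (P *m C)^T *m (P *m C) = C^T *m P *m C.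
Proof.
have PP : P *m P = P by rewrite mulmxBr mulmx1 mulmxBl mul1mx hatmx_idem subrr subr0.
by rewrite trmx_mul linearB /= trmx1 trmx_hatmx !mulmxA -(mulmxA C^T P P) PP.
Qed.

Lemma unitmx_ridge_block : S \in unitmx ->
  (row_mx A C)^T *m row_mx A C + block_mx 0 0 0 L \in unitmx.
Proof.
move=> S_unit.
have -> : (row_mx A C)^T *m row_mx A C + block_mx 0 0 0 L =
    block_mx 1%:M 0 (C^T *m A *m invmx (A^T *m A)) 1%:M *m
    block_mx (A^T *m A) (A^T *m C) 0 S.
  rewrite tr_row_mx mul_col_row add_block_mx !addr0 mulmx_block.
  rewrite !mul1mx !mul0mx !addr0 mulmxKV //.
  congr block_mx; rewrite !mulmxBr !mulmxBl mulmx1 addrA.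
  by rewrite /hatmx !mulmxA [X in _ = X + L]addrC subrK.
rewrite unitmx_mul !unitmxE det_lblock det_ublock !det1 mulr1 unitr1 unitrM -!unitmxE.
by rewrite AtA_unit S_unit.
Qed.

Lemma ridge_hatmx_row_mx_schur : S \in unitmx ->
  ridge_hatmx (row_mx A C) (block_mx 0 0 0 L) =
  Q + P *m C *m invmx S *m C^T *m P.
Proof.
move=> S_unit; set Z2 := invmx S *m C^T *m P.
set Z1 := invmx (A^T *m A) *m A^T *m (1%:M - C *m Z2).
have MZ : ((row_mx A C)^T *m row_mx A C + block_mx 0 0 0 L) *m col_mx Z1 Z2 =
    (row_mx A C)^T.
  rewrite tr_row_mx mul_col_row add_block_mx !addr0 mul_block_col; congr col_mx.
    by rewrite /Z1 !mulmxA mulmxV // mul1mx mulmxBr mulmx1 !mulmxA subrK.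
  have SZ2 : S *m Z2 = C^T *m P by rewrite /Z2 !mulmxA mulmxV // mul1mx.
  have -> : C^T *m A *m Z1 = C^T *m Q - C^T *m Q *m C *m Z2.
    by rewrite /Z1 !mulmxBr mulmx1 /hatmx !mulmxA.
  have -> : C^T *m C + L = S + C^T *m Q *m C.
    by rewrite mulmxBr mulmx1 mulmxBl addrAC subrK.
  by rewrite mulmxDl SZ2 addrACA addNr addr0 mulmxBr mulmx1 addrC subrK.
have ZE : invmx ((row_mx A C)^T *m row_mx A C + block_mx 0 0 0 L) *m
    (row_mx A C)^T = col_mx Z1 Z2.
  by apply: (canLR (mulKmx (unitmx_ridge_block S_unit))); rewrite MZ.
rewrite /ridge_hatmx -mulmxA ZE mul_row_col /Z1 /Z2 !mulmxA -[A *m _ *m A^T]/Q.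
by rewrite mulmxBr mulmx1 [in RHS]mulmxBl mul1mx !mulmxBl !mulmxA addrAC addrA.
Qed.

Lemma ridge_hatmx_row_mx : L \in unitmx -> S \in unitmx ->
  ridge_hatmx (row_mx A C) (block_mx 0 0 0 L) =
  Q *m (1%:M - K) + K.
Proof.
move=> L_unit S_unit; rewrite ridge_hatmx_row_mx_schur // -(mulmxA (invmx _) P).
rewrite (subr_invmx_1D (unitmx_1DPG L_unit S_unit)) push_through_invmx //.
set V := C *m invmx S *m C^T *m P.
have -> : P *m C *m invmx S *m C^T *m P = P *m V by rewrite !mulmxA.
by rewrite mulmxBr mulmx1 mulmxBl mul1mx addrA addrAC.
Qed.

End RidgeHat.

Lemma ridge_hatmx_weighted {R : comUnitRingType} {n m} (D : 'M[R]_n)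
    (X : 'M[R]_(n, m)) (L : 'M[R]_m) : D^T = D -> D \in unitmx ->
  X *m invmx (X^T *m (D *m D) *m X + L) *m X^T =
  invmx D *m ridge_hatmx (D *m X) L *m invmx D.
Proof.
move=> DT D_unit; rewrite /ridge_hatmx trmx_mul DT !mulmxA mulVmx // mul1mx.
by rewrite mulmxK.
Qed.

Section SqrtDiag.
Context {R : realType} {n : nat} {w : 'I_n -> R}.

Lemma trmx_sqrt_diag : (sqrt_diag w)^T = sqrt_diag w.
Proof. exact: tr_diag_mx. Qed.

Hypothesis w_gt0 : forall i, 0 < w i.

Lemma sqrt_diagM : sqrt_diag w *m sqrt_diag w = diag_mx (\row_i w i).
Proof.
rewrite mulmx_diag; congr diag_mx; apply/matrixP => i j.
by rewrite !mxE -expr2 sqr_sqrtr // ltW.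
Qed.

Lemma sqrt_diagV : sqrt_diag w *m invsqrt_diag w = 1%:M.
Proof.
rewrite mulmx_diag -diag_const_mx; congr diag_mx; apply/matrixP => i j.
by rewrite !mxE mulfV // gt_eqF // sqrtr_gt0.
Qed.

Lemma unitmx_sqrt_diag : sqrt_diag w \in unitmx.
Proof. by case: (mulmx1_unit sqrt_diagV). Qed.

Lemma invsqrt_diagE : invsqrt_diag w = invmx (sqrt_diag w).
Proof. by rewrite -[RHS]mulmx1 -sqrt_diagV mulKmx // unitmx_sqrt_diag. Qed.

End SqrtDiag.

Theorem proposition1 (R : realType) (n p1 B : nat) (pb : 'I_B -> nat)
  (X1 : 'M[R]_(n, p1)) (X2b : forall b : 'I_B, 'M[R]_(n, pb b))
  (lam : 'I_B -> R) (w : 'I_n -> R) :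
  \rank X1 = p1 ->
  (forall b, 0 < lam b) ->
  (forall i, 0 < w i) ->
  let X2 : 'M[R]_(n, \sum_(b < B) pb b) := \mxrow_(b < B) X2b b in
  let X : 'M[R]_(n, p1 + \sum_(b < B) pb b) := row_mx X1 X2 in
  let Lam : 'M[R]_(\sum_(b < B) pb b) := \mxdiag_(b < B) ((lam b)%:M : 'M[R]_(pb b)) in
  let Lam' : 'M[R]_(p1 + \sum_(b < B) pb b) := block_mx 0 0 0 Lam in
  let W : 'M[R]_n := diag_mx (\row_i w i) in
  let Wh := sqrt_diag w in
  let Wmh := invsqrt_diag w in
  let X1W := Wh *m X1 in
  let P1W : 'M[R]_n := 1%:M - X1W *m invmx (X1W^T *m X1W) *m X1W^T in
  let Gam : 'M[R]_n :=
    Wh *m (\sum_(b < B) (lam b)^-1 *: (X2b b *m (X2b b)^T)) *m Wh in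
  let HW : 'M[R]_n := X *m invmx (X^T *m W *m X + Lam') *m X^T in
  let H2 : 'M[R]_n :=
    Wmh *m Gam *m (1%:M - invmx (1%:M + P1W *m Gam) *m P1W *m Gam)
        *m P1W *m Wmh in
  HW = Wmh *m X1W *m invmx (X1W^T *m X1W) *m X1W^T
         *m (1%:M - Wh *m H2 *m Wh) *m Wmh + H2.
Proof.
move=> rkX1 lam_gt0 w_gt0 X2 X Lam Lam' W Wh Wmh X1W P1W Gam HW H2.
have Wh_unit : Wh \in unitmx := unitmx_sqrt_diag w_gt0.
have WmhE : Wmh = invmx Wh := invsqrt_diagE w_gt0.
have [Lam_unit LamV] := @invmx_mxdiag_scalar _ _ pb lam (fun b => unitf_gt0 (lam_gt0 b)).
set C := Wh *m X2.
have GamE : Gam = C *m invmx Lam *m C^T.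
  rewrite /Gam /C LamV trmx_mul trmx_sqrt_diag !mulmxA -!(mulmxA Wh).
  congr (_ *m (_ *m _)); rewrite mul_mxrow_mxdiag_tr_mxrow; apply: eq_bigr => b _.
  by rewrite mul_mx_scalar -scalemxAl.
have X1W_unit : X1W^T *m X1W \in unitmx.
  apply: unitmx_gram.
  by rewrite -mxrank_tr trmx_mul mxrankMfree ?mxrank_tr // row_free_unit unitmx_tr.
have S_unit : C^T *m P1W *m C + Lam \in unitmx.
  rewrite -(residual_gram _ _ X1W_unit); apply: unitmx_gram_add_posdef.
  exact: posdefmx_mxdiag_scalar.
have HWE : HW = Wmh *m ridge_hatmx (row_mx X1W C) Lam' *m Wmh.
  rewrite /HW /W -(sqrt_diagM w_gt0) ridge_hatmx_weighted ?trmx_sqrt_diag //.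
  by rewrite mul_mx_row WmhE.
have H2E : Wh *m H2 *m Wh =
    Gam *m (1%:M - invmx (1%:M + P1W *m Gam) *m P1W *m Gam) *m P1W.
  by rewrite /H2 WmhE !mulmxA mulmxV // mul1mx mulmxKV.
have hat_split := ridge_hatmx_row_mx _ _ _ X1W_unit Lam_unit S_unit.
rewrite -/P1W -GamE -H2E in hat_split.
have WhK (M : 'M[R]_n) : Wmh *m (Wh *m M *m Wh) *m Wmh = M.
  by rewrite WmhE -(mulmxA Wh) mulKmx // mulmxK.
rewrite HWE hat_split mulmxDr mulmxDl WhK; congr (_ + _).
by rewrite /hatmx !mulmxA.
Qed.
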